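(* Let $K\subseteq\mathbb R^2$ be a compact set containing no array on three points and let $\delta>0$. There exists $n_0\in\mathbb N$ such that for all $n\ge n_0$ the graphs $\Gamma^n_{\mathrm{hor}}$ and $\Gamma^n_{\mathrm{vert}}$ are disjoint (they have no common vertex).
   Context: An array on three points is a triple $a_1,a_2,a_3$ of points in the plane with $a_1\ne a_2$, $a_2\ne a_3$, such that the segments $[a_1;a_2]$ and $[a_2;a_3]$ are each parallel to a coordinate axis and are mutually orthogonal. Let $p(x,y)=x$, $q(x,y)=y$. For $n\in\mathbb N$ the graph $\Gamma^n$ has vertex set all lattice points $(i/2^n,j/2^n)$, $i,j\in\mathbb Z$, such that the square $[i/2^n;(i+1)/2^n)\times[j/2^n;(j+1)/2^n)$ meets $K$, and edges all two-element sets $\{u_1,u_2\}$ of vertices with $|p(u_1)-p(u_2)|\le 1/2^n$ or $|q(u_1)-q(u_2)|\le 1/2^n$. An edge $u_1u_2$ is vertical if $|p(u_1)-p(u_2)|\le 1/2^n$ and horizontal if $|q(u_1)-q(u_2)|\le 1/2^n$ (an edge may be both). It is long if the Euclidean distance $|u_1-u_2|\ge\delta$ and short if $|u_1-u_2|<\delta$. $\Gamma^n_{\mathrm{hor}}$ is the subgraph of $\Gamma^n$ formed by all long horizontal edges and their endpoints; $\Gamma^n_{\mathrm{vert}}$ is the subgraph formed by all long vertical edges and their endpoints. *)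

From HB Require Import structures.
From mathcomp Require Import all_boot all_order all_algebra.
From mathcomp Require Import all_classical all_reals topology normedtype.
Set Implicit Arguments. Unset Strict Implicit. Unset Printing Implicit Defensive.
Import Order.TTheory GRing.Theory Num.Theory.
Local Open Scope ring_scope.
Local Open Scope classical_set_scope.

Section Defs.
Variable R : realType.

Definition p (a : R * R) : R := a.1.
Definition q (a : R * R) : R := a.2.

Definition hor_seg (a b : R * R) : Prop := q a = q b.
Definition vert_seg (a b : R * R) : Prop := p a = p b.

Definition is_array3 (a1 a2 a3 : R * R) : Prop :=
  a1 <> a2 /\ a2 <> a3 /\
  ((hor_seg a1 a2 /\ vert_seg a2 a3) \/ (vert_seg a1 a2 /\ hor_seg a2 a3)).

Definition contains_no_array3 (K : set (R * R)) : Prop :=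
  ~ exists a1 a2 a3, K a1 /\ K a2 /\ K a3 /\ is_array3 a1 a2 a3.

Definition latpt (n : nat) (v : int * int) : R * R :=
  (v.1%:~R / 2%:R ^+ n, v.2%:~R / 2%:R ^+ n).

Definition gvertex (K : set (R * R)) (n : nat) (v : int * int) : Prop :=
  exists x, K x /\
    v.1%:~R / 2%:R ^+ n <= x.1 < (v.1 + 1)%:~R / 2%:R ^+ n /\
    v.2%:~R / 2%:R ^+ n <= x.2 < (v.2 + 1)%:~R / 2%:R ^+ n.

Definition edist (a b : R * R) : R :=
  Num.sqrt ((a.1 - b.1) ^+ 2 + (a.2 - b.2) ^+ 2).

Definition gedge (K : set (R * R)) (n : nat) (u1 u2 : int * int) : Prop :=
  gvertex K n u1 /\ gvertex K n u2 /\ u1 <> u2 /\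
  (`|p (latpt n u1) - p (latpt n u2)| <= 1 / 2%:R ^+ n \/
   `|q (latpt n u1) - q (latpt n u2)| <= 1 / 2%:R ^+ n).

Definition vertical_edge (n : nat) (u1 u2 : int * int) : Prop :=
  `|p (latpt n u1) - p (latpt n u2)| <= 1 / 2%:R ^+ n.
Definition horizontal_edge (n : nat) (u1 u2 : int * int) : Prop :=
  `|q (latpt n u1) - q (latpt n u2)| <= 1 / 2%:R ^+ n.
Definition long_edge (delta : R) (n : nat) (u1 u2 : int * int) : Prop :=
  delta <= edist (latpt n u1) (latpt n u2).

(* vertex sets of Gamma^n_hor and Gamma^n_vert: endpoints of long
   horizontal (resp. vertical) edges *)
Definition in_Gamma_hor (K : set (R * R)) (delta : R) (n : nat) (v : int * int) : Prop :=
  exists w, gedge K n v w /\ horizontal_edge n v w /\ long_edge delta n v w.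
Definition in_Gamma_vert (K : set (R * R)) (delta : R) (n : nat) (v : int * int) : Prop :=
  exists w, gedge K n v w /\ vertical_edge n v w /\ long_edge delta n v w.

End Defs.

From Pilot Require Import Defs.
From HB Require Import structures.
From mathcomp Require Import all_boot all_order all_algebra.
From mathcomp Require Import all_classical all_reals topology normedtype.
From mathcomp Require Import lra.
Import Order.TTheory GRing.Theory Num.Theory.
Import numFieldNormedType.Exports.
Local Open Scope ring_scope.
Local Open Scope classical_set_scope.

(* If the two graphs shared a vertex v for arbitrarily large n, the long
   horizontal and the long vertical edge at v would yield points a, b, c of K
   (one in the square of each endpoint) with b horizontally and c vertically
   aligned with a up to 3/2^n, each at distance about delta from a.  By
   compactness of K^3 such triples accumulate at a triple with exact alignment
   and positive lengths, which is an array on three points in K. *)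

Section AlmostArrays.
Context {R : realType}.
Implicit Types (K : set (R * R)) (a b c : R * R) (d e r : R).

(* The array [b, a, c] with corner [a], relaxed: alignment up to [e], lengths
   at least [d]. *)
Definition almost_array d e a b c : Prop :=
  `|a.2 - b.2| <= e /\ `|a.1 - c.1| <= e /\
  d <= `|a.1 - b.1| /\ d <= `|a.2 - c.2|.

Lemma almost_array_mono d d' e e' a b c : d' <= d -> e <= e' ->
  almost_array d e a b c -> almost_array d' e' a b c.
Proof.
move=> dd' ee' [h1 [h2 [h3 h4]]].
split; first exact: le_trans ee'.
split; first exact: le_trans ee'.
by split; apply: le_trans dd' _.
Qed.

Lemma ball_pairE a b r : ball a r b <-> `|a.1 - b.1| < r /\ `|a.2 - b.2| < r.
Proof. by rewrite /ball /= /prod_ball -!ball_normE. Qed.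

Lemma ler_dist_perturb {u v u' v' r : R} :
  `|u - u'| < r -> `|v - v'| < r -> `|u' - v'| <= `|u - v| + 2 * r.
Proof.
move=> uu vv.
have := ler_distD v u' v'; have := ler_distD u u' v.
rewrite (distrC u' u) => h1 h2; lra.
Qed.

Lemma almost_array_perturb {d e r a b c a' b' c'} :
  ball a r a' -> ball b r b' -> ball c r c' ->
  almost_array d e a b c -> almost_array (d - 2 * r) (e + 2 * r) a' b' c'.
Proof.
move=> /ball_pairE[a1 a2] /ball_pairE[b1 b2] /ball_pairE[c1 c2] [h1 [h2 [h3 h4]]].
have := ler_dist_perturb a2 b2; have := ler_dist_perturb a1 c1.
have sym (u u' : R) : `|u - u'| < r -> `|u' - u| < r by rewrite distrC.
have := ler_dist_perturb (sym _ _ a1) (sym _ _ b1).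
have := ler_dist_perturb (sym _ _ a2) (sym _ _ c2).
rewrite /almost_array; lra.
Qed.

Lemma norm_le_pos_eq0 (x : R) : (forall e, 0 < e -> `|x| <= e) -> x = 0.
Proof.
move=> small; apply/normr0_eq0/eqP; rewrite eq_le normr_ge0 andbT.
by apply/ler_addgt0Pr => e /small; rewrite add0r.
Qed.

Lemma array_of_almost_arrays d a b c : 0 < d ->
  (forall r, 0 < r -> almost_array (d - 2 * r) (3 * r) a b c) -> is_array3 b a c.
Proof.
move=> d0 almost.
have [_ [_ [ab ac]]] := almost (d / 4) ltac:(by rewrite divr_gt0).
have hor : a.2 = b.2.
  apply/eqP; rewrite -subr_eq0; apply/eqP/norm_le_pos_eq0 => e e0.
  have [+ _] := almost (e / 3) ltac:(by rewrite divr_gt0); lra.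
have vert : a.1 = c.1.
  apply/eqP; rewrite -subr_eq0; apply/eqP/norm_le_pos_eq0 => e e0.
  have [_ [+ _]] := almost (e / 3) ltac:(by rewrite divr_gt0); lra.
split; first by move=> ba; move: ab; rewrite ba subrr normr0; lra.
split; first by move=> ac0; move: ac; rewrite -ac0 subrr normr0; lra.
by left.
Qed.

Lemma array_of_compact_almost_arrays {K d} :
  compact K -> 0 < d ->
  (forall e, 0 < e -> exists a b c, K a /\ K b /\ K c /\ almost_array d e a b c) ->
  exists a b c, K a /\ K b /\ K c /\ is_array3 b a c.
Proof.
move=> cK d0 almost.
pose S e := [set t : (R * R) * ((R * R) * (R * R)) |
  (K `*` (K `*` K)) t /\ almost_array d e t.1 t.2.1 t.2.2].
pose F := filter_from [set e : R | 0 < e] S.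
have F_proper : ProperFilter F.
  apply: filter_from_proper; last first.
    by move=> e /almost[a [b [c [Ka [Kb [Kc abc]]]]]]; exists (a, (b, c)).
  apply: filter_from_filter; first by exists 1 => /=.
  move=> e e' /= e0 e'0; exists (Num.min e e'); first by rewrite /= lt_min e0.
  by move=> t [Kt abc]; split; split => //;
    apply: almost_array_mono abc => //; rewrite ge_min lexx ?orbT.
have [|z [Kz zF]] := compact_setX cK (compact_setX cK cK) F_proper.
  by exists 1; [exact: ltr01 | move=> t []].
exists z.1, z.2.1, z.2.2; case: Kz => Kz1 [Kz2 Kz3]; do 3!split => //.
apply: array_of_almost_arrays d0 _ => r r0.
have FSr : F (S r) by exists r.
have [t [[_ abc] zt]] := zF (S r) (ball z r) FSr (nbhsx_ballx z r r0).
have [za [zb zc]] : ball t.1 r z.1 /\ ball t.2.1 r z.2.1 /\ ball t.2.2 r z.2.2.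
  by case: (ball_sym zt) => ? [].
have -> : 3 * r = r + 2 * r by lra.
exact: almost_array_perturb za zb zc abc.
Qed.

Implicit Types (delta : R) (n : nat) (v : int * int).

Lemma edist_le_norm1 (a b : R * R) : Defs.edist a b <= `|a.1 - b.1| + `|a.2 - b.2|.
Proof.
rewrite /Defs.edist -(ger0_norm (addr_ge0 (normr_ge0 _) (normr_ge0 _))).
rewrite -sqrtr_sqr; apply: ler_wsqrtr.
set x := a.1 - b.1; set y := a.2 - b.2.
have [-> ->] : x ^+ 2 = `|x| ^+ 2 /\ y ^+ 2 = `|y| ^+ 2 by rewrite !real_normK ?num_real.
by rewrite sqrrD -addrA lerD2l lerDr mulrn_wge0 // mulr_ge0.
Qed.

Lemma gvertex_ball {K n v} :
  gvertex K n v -> exists x, K x /\ ball (latpt R n v) (1 / 2%:R ^+ n) x.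
Proof.
move=> [x [Kx [/andP[x1 x1'] /andP[x2 x2']]]]; exists x; split => //.
move: x1' x2'; rewrite !intrD !mulrDl => x1' x2'.
by apply/ball_pairE; rewrite /= !ltr_norml; split; apply/andP; split; lra.
Qed.

Lemma Gamma_hor_vert_almost_array {K delta n v} :
  in_Gamma_hor K delta n v -> in_Gamma_vert K delta n v ->
  exists a b c, K a /\ K b /\ K c /\
    almost_array (delta - 3 / 2%:R ^+ n) (3 / 2%:R ^+ n) a b c.
Proof.
move=> [w1 [[gv [gw1 _]] [hor long1]]] [w2 [[_ [gw2 _]] [vert long2]]].
have [a [Ka va]] := gvertex_ball gv.
have [b [Kb w1b]] := gvertex_ball gw1.
have [c [Kc w2c]] := gvertex_ball gw2.
exists a, b, c; do 3!split => //.
set h := 1 / 2%:R ^+ n in hor vert va w1b w2c.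
have lattice : almost_array (delta - h) h (latpt R n v) (latpt R n w1) (latpt R n w2).
  have := le_trans long1 (edist_le_norm1 _ _).
  have := le_trans long2 (edist_le_norm1 _ _).
  move: hor vert; rewrite /horizontal_edge /vertical_edge /p /q -/h.
  by move=> hor vert l2 l1; do 3!split => //; lra.
apply: almost_array_mono (almost_array_perturb va w1b w2c lattice).
  by rewrite /h; lra.
by rewrite /h; lra.
Qed.

Lemma inv_exp2_le_eventually (m : R) :
  0 < m -> exists N, forall n, (N <= n)%N -> 1 / 2%:R ^+ n <= m.
Proof.
move=> m0; exists (Num.truncn m^-1).+1 => n Nn.
rewrite ler_pdivrMr ?exprn_gt0 // -ler_pdivrMl // mulr1.
apply/ltW/(lt_le_trans (truncnS_gt _)).
rewrite -natrX ler_nat (leq_trans _ (leq_pexp2l _ Nn)) //.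
exact/ltnW/ltn_expl.
Qed.

End AlmostArrays.

Theorem mainTheorem3 (R : realType) (K : set (R * R)) (delta : R) :
  compact K -> contains_no_array3 K -> 0 < delta ->
  exists n0 : nat, forall n : nat, (n0 <= n)%N ->
    forall v : int * int, ~ (in_Gamma_hor K delta n v /\ in_Gamma_vert K delta n v).
Proof.
move=> cK noA delta0; apply: contrapT => frequently.
suff [a [b [c [Ka [Kb [Kc abc]]]]]] : exists a b c, K a /\ K b /\ K c /\ is_array3 b a c.
  by apply: noA; exists b, a, c.
have half0 : 0 < delta / 2 by rewrite divr_gt0.
apply: (array_of_compact_almost_arrays cK half0) => e e0.
have [N smallN] : exists N, forall n, (N <= n)%N ->
    1 / 2%:R ^+ n <= Num.min (e / 3) (delta / 6).
  by apply: inv_exp2_le_eventually; rewrite lt_min !divr_gt0.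
have [n [Nn [v [hv vv]]]] : exists n, (N <= n)%N /\
    exists v, in_Gamma_hor K delta n v /\ in_Gamma_vert K delta n v.
  apply: contrapT => none; apply: frequently; exists N => n Nn v hvv.
  by apply: none; exists n; split => //; exists v.
have [a [b [c [Ka [Kb [Kc abc]]]]]] := Gamma_hor_vert_almost_array hv vv.
have := smallN n Nn; rewrite le_min => /andP[he hdelta].
by exists a, b, c; do 3!split => //; apply: almost_array_mono abc; lra.
Qed.
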